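(* Let $\mathcal X$, $\mathbf f$, $\mathbf M$, $\mathbf B_j$, $\mathbf H_j$, $\Phi$, $\Xi$, $\tilde{\mathcal X}$, $\tilde{\mathbf f}$, $\tilde{\mathbf M}$ and $\Phi_A$ be as in the context. Let $\tilde{\xi}^*:\tilde{\mathcal X}\to[0,\infty)$ be a solution of the optimization problem $$\min \Phi_A(\tilde{\xi})$$ over all designs $\tilde\xi:\tilde{\mathcal X}\to[0,\infty)$ subject to (i) $\tilde{\xi}(j,x)=\tilde{\xi}(1,x)$ for all $x\in\mathcal X$ and all $j=2,\ldots,s$; (ii) $\tilde{\xi}(y)=1$ for all $y\in\tilde{\mathcal Y}_j$ and all $j=1,\ldots,s$; (iii) the design $\tilde{\xi}(1,\cdot): x\mapsto\tilde\xi(1,x)$ on $\mathcal X$ belongs to $\Xi$. Then $\tilde{\xi}^*(1,\cdot)$ is a CBR-optimal design in the class $\Xi$, i.e. $\tilde{\xi}^*(1,\cdot)\in\Xi$ and $\Phi(\tilde{\xi}^*(1,\cdot))\le\Phi(\xi)$ for all $\xi\in\Xi$.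
   Context: Let $\mathcal X$ be a finite set (design space) and $\mathbf f:\mathcal X\to\mathbb R^p$ with $\mathrm{span}\{\mathbf f(x):x\in\mathcal X\}=\mathbb R^p$. A design on $\mathcal X$ is a map $\xi:\mathcal X\to[0,\infty)$ (exact designs take values in $\{0,1,2,\dots\}$). Its information matrix is $\mathbf M(\xi)=\sum_{x\in\mathcal X}\xi(x)\mathbf f(x)\mathbf f(x)^\top$. Let $s\ge1$, let $\mathbf B_1,\ldots,\mathbf B_s$ be symmetric non-negative definite $p\times p$ matrices and $\mathbf H_1,\ldots,\mathbf H_s$ symmetric positive definite $p\times p$ matrices. The compound Bayes risk criterion (CBRC) is $\Phi(\xi)=\sum_{j=1}^s\mathrm{tr}\big((\mathbf M(\xi)+\mathbf B_j)^{-1}\mathbf H_j\big)$ if all $\mathbf M(\xi)+\mathbf B_j$ are non-singular, and $\Phi(\xi)=+\infty$ otherwise. Let $\Xi\subseteq[0,\infty)^{\mathcal X}$ be a set of permissible designs containing at least one $\xi$ with $\Phi(\xi)<+\infty$. Artificial model: let $r_j=\mathrm{rank}(\mathbf B_j)$, let $\tilde{\mathcal Y}_j=\{y^{(j)}_1,\ldots,y^{(j)}_{r_j}\}$ be auxiliary sets and $\tilde{\mathcal X}_j=\{j\}\times\mathcal X$, chosen so that $\tilde{\mathcal X}_1,\ldots,\tilde{\mathcal X}_s,\tilde{\mathcal Y}_1,\ldots,\tilde{\mathcal Y}_s$ are pairwise disjoint; set $\tilde{\mathcal X}=\bigcup_{j=1}^s(\tilde{\mathcal X}_j\cup\tilde{\mathcal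 Y}_j)$. For each $j$ choose $\mathbf K_j\in\mathbb R^{p\times p}$ with $\mathbf H_j=\mathbf K_j\mathbf K_j^\top$ (so $\mathbf K_j$ is non-singular), set $\tilde{\mathbf f}_j(x)=\mathbf K_j^{-1}\mathbf f(x)$ for $x\in\mathcal X$, and choose vectors $\mathbf u_j(y^{(j)}_k)\in\mathbb R^p$, $k=1,\ldots,r_j$, with $\mathbf K_j^{-1}\mathbf B_j\mathbf K_j^{-\top}=\sum_{k=1}^{r_j}\mathbf u_j(y^{(j)}_k)\mathbf u_j(y^{(j)}_k)^\top$. Define $\tilde{\mathbf f}:\tilde{\mathcal X}\to\mathbb R^{sp}$ by: $\tilde{\mathbf f}((j,x))$ is the vector whose $j$-th block of $p$ coordinates equals $\tilde{\mathbf f}_j(x)$ and all other coordinates are $0$; for $y\in\tilde{\mathcal Y}_j$, $\tilde{\mathbf f}(y)$ is the vector whose $j$-th block of $p$ coordinates equals $\mathbf u_j(y)$ and all other coordinates are $0$. For a design $\tilde\xi:\tilde{\mathcal X}\to[0,\infty)$ let $\tilde{\mathbf M}(\tilde\xi)=\sum_{\tilde x\in\tilde{\mathcal X}}\tilde\xi(\tilde x)\tilde{\mathbf f}(\tilde x)\tilde{\mathbf f}(\tilde x)^\top$, and let $\Phi_A(\tilde\xi)=\mathrm{tr}(\tilde{\mathbf M}(\tilde\xi)^{-1})$ if $\tilde{\mathbf M}(\tilde\xi)$ is non-singular and $\Phi_A(\tilde\xi)=+\infty$ otherwise ($A$-optimality criterion). *)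

From HB Require Import structures.
From mathcomp Require Import all_boot all_order all_algebra.
Set Implicit Arguments. Unset Strict Implicit. Unset Printing Implicit Defensive.
Import Order.TTheory GRing.Theory Num.Theory.
Local Open Scope ring_scope.

(* Extended reals [0,+oo]-style values: None = +infinity. *)
Definition le_ext (R : numDomainType) (a b : option R) : Prop :=
  match a, b with
  | _, None => True
  | None, Some _ => False
  | Some x, Some y => x <= y
  end.

Definition nnd (R : numDomainType) p (A : 'M[R]_p) : Prop :=
  A^T = A /\ forall v : 'cV[R]_p, 0 <= (v^T *m A *m v) 0 0.
Definition pd (R : numDomainType) p (A : 'M[R]_p) : Prop :=
  A^T = A /\ forall v : 'cV[R]_p, v != 0 -> 0 < (v^T *m A *m v) 0 0.

Definition infoM (R : numDomainType) (X : finType) p (f : X -> 'cV[R]_p)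
  (xi : {ffun X -> R}) : 'M[R]_p :=
  \sum_(x : X) xi x *: (f x *m (f x)^T).

(* compound Bayes risk criterion; None = +infinity *)
Definition CBRC (R : numFieldType) (X : finType) p s (f : X -> 'cV[R]_p)
  (B H : 'I_s -> 'M[R]_p) (xi : {ffun X -> R}) : option R :=
  if [forall j, infoM f xi + B j \in unitmx]
  then Some (\sum_(j < s) \tr (invmx (infoM f xi + B j) *m H j))
  else None.

(* artificial design space: disjoint union of {j} x X (j < s) and Y_j = 'I_(r j) *)
Definition artX s (r : 'I_s -> nat) (X : finType) : finType :=
  (('I_s * X) + {j : 'I_s & 'I_(r j)})%type.

(* vector in R^{sp} whose j-th block of p coordinates is v, others 0 *)
Definition blockv (R : numDomainType) s p (j : 'I_s) (v : 'cV[R]_p) : 'cV[R]_(s * p) :=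
  (mxvec (\matrix_(i < s, k < p) (if i == j then v k 0 else 0)))^T.

Definition artf (R : numFieldType) (X : finType) p s (r : 'I_s -> nat)
  (f : X -> 'cV[R]_p) (K : 'I_s -> 'M[R]_p) (u : forall j, 'I_(r j) -> 'cV[R]_p)
  (t : artX r X) : 'cV[R]_(s * p) :=
  match t with
  | inl (j, x) => blockv j (invmx (K j) *m f x)
  | inr (existT j y) => blockv j (u j y)
  end.

Definition PhiA (R : numFieldType) (T : finType) n (g : T -> 'cV[R]_n)
  (xi : {ffun T -> R}) : option R :=
  if infoM g xi \in unitmx then Some (\tr (invmx (infoM g xi))) else None.

(* the design x |-> xi(1, x)  (index 1 is the ordinal 0) *)
Definition first_design s (r : 'I_s -> nat) (X : finType) (R : numDomainType)
  (hs : (0 < s)%N) (xi : {ffun artX r X -> R}) : {ffun X -> R} :=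
  [ffun x => xi (inl (Ordinal hs, x))].

(* constraints (i)-(iii), plus nonnegativity of the design *)
Definition artFeasible s (r : 'I_s -> nat) (X : finType) (R : numDomainType)
  (hs : (0 < s)%N) (Xi : {ffun X -> R} -> Prop) (xi : {ffun artX r X -> R}) : Prop :=
  [/\ forall t, 0 <= xi t,
      forall (j : 'I_s) (x : X), xi (inl (j, x)) = xi (inl (Ordinal hs, x)),
      forall (j : 'I_s) (y : 'I_(r j)), xi (inr (existT _ j y)) = 1
    & Xi (first_design hs xi)].

From HB Require Import structures.
From mathcomp Require Import all_boot all_order all_algebra.
Import Order.TTheory GRing.Theory Num.Theory.
Set Implicit Arguments. Unset Strict Implicit. Unset Printing Implicit Defensive.
Local Open Scope ring_scope.

(* Under constraints (i) and (ii) the artificial information matrix is block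
   diagonal, its j-th block being the congruence K_j^-1 (M(xi) + B_j) K_j^-T.
   The trace of the inverse of a block-diagonal matrix is the sum of the traces
   of the inverses of the blocks, and tr((K^-1 A K^-T)^-1) = tr(A^-1 K K^T), so
   Phi_A of a feasible artificial design equals Phi of its first block.  Since
   every design of Xi is the first block of a feasible artificial design, the
   two minimisation problems coincide. *)

Lemma mulmx1_invmx (R : comUnitRingType) n (A B : 'M[R]_n) :
  A *m B = 1%:M -> invmx A = B.
Proof.
move=> AB1; have [uA _] := mulmx1_unit AB1.
by rewrite -[invmx A]mulmx1 -AB1 mulmxA mulVmx // mul1mx.
Qed.

Lemma invmx_congr (R : fieldType) n (K A : 'M[R]_n) :
  K \in unitmx -> A \in unitmx ->
  invmx (invmx K *m A *m (invmx K)^T) = K^T *m invmx A *m K.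
Proof.
move=> uK uA; apply: mulmx1_invmx.
have KtK : (invmx K)^T *m K^T = 1%:M by rewrite -trmx_mul mulmxV // trmx1.
rewrite !mulmxA -(mulmxA _ _ K^T) KtK mulmx1.
by rewrite -(mulmxA _ _ (invmx A)) mulmxV // mulmx1 mulVmx.
Qed.

Lemma pd_factor_unit (R : numFieldType) p (H K : 'M[R]_p) :
  pd H -> H = K *m K^T -> K \in unitmx.
Proof.
move=> [_ H_pos] defH; apply/negPn/negP => nK.
have nz_ker : kermx K != 0 by rewrite kermx_eq0 row_free_unit.
have [i ni] : exists i, row i (kermx K) != 0.
  apply/existsP; apply: contraNT nz_ker => /existsPn zero_rows.
  by apply/eqP/row_matrixP => i; rewrite row0; apply/eqP/negPn/zero_rows.
have vK : row i (kermx K) *m K = 0 by rewrite -row_mul mulmx_ker row0.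
have := H_pos (row i (kermx K))^T; rewrite trmx_eq0 ni => /(_ isT).
by rewrite trmxK defH mulmxA vK !mul0mx mxE ltxx.
Qed.

Lemma mxvec_index_eq m n (i j : 'I_m) (k l : 'I_n) :
  (mxvec_index i k == mxvec_index j l) = (i == j) && (k == l).
Proof.
by rewrite /mxvec_index (inj_eq (@cast_ord_inj _ _ _)) (inj_eq (@enum_rank_inj _)).
Qed.

Section BlockDiagonal.

Variables (R : fieldType) (s p : nat).

(* The isometric embedding of R^p as the j-th block of R^(s * p), with the block
   layout of [mxvec] used by [blockv]. *)
Definition block_emb (j : 'I_s) : 'M[R]_(s * p, p) :=
  \matrix_(a, b) ((a == mxvec_index j b)%:R).

Lemma block_emb_orth (j k : 'I_s) :
  (block_emb j)^T *m block_emb k = if j == k then 1%:M else 0.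
Proof.
apply/matrixP => b c; rewrite !mxE (bigD1 (mxvec_index j b)) //= big1 ?addr0.
  by rewrite !mxE eqxx mul1r mxvec_index_eq; case: (j == k); rewrite ?mxE.
by move=> a /negbTE na; rewrite !mxE na mul0r.
Qed.

Lemma sum_block_emb_proj : \sum_(j < s) block_emb j *m (block_emb j)^T = 1%:M.
Proof.
apply/matrixP => a a'; rewrite summxE; case: (mxvec_indexP a) => i k.
rewrite (bigD1 i) //= big1 ?addr0; last first.
  move=> j /negbTE nj; rewrite mxE big1 // => b _.
  by rewrite !mxE mxvec_index_eq (eq_sym i) nj mul0r.
rewrite mxE (bigD1 k) //= big1 ?addr0; last first.
  by move=> b nb; rewrite !mxE mxvec_index_eq (eq_sym k) (negbTE nb) andbF mul0r.
by rewrite !mxE mxvec_index_eq !eqxx mul1r eq_sym.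
Qed.

Definition blockdiag (A : 'I_s -> 'M[R]_p) : 'M[R]_(s * p) :=
  \sum_k block_emb k *m A k *m (block_emb k)^T.

Lemma blockdiag_emb (A : 'I_s -> 'M[R]_p) j :
  blockdiag A *m block_emb j = block_emb j *m A j.
Proof.
rewrite mulmx_suml (bigD1 j) //= big1 ?addr0.
  by rewrite -mulmxA block_emb_orth eqxx mulmx1.
by move=> k nk; rewrite -mulmxA block_emb_orth (negbTE nk) mulmx0.
Qed.

Lemma blockdiag_unit (A : 'I_s -> 'M[R]_p) j :
  blockdiag A \in unitmx -> A j \in unitmx.
Proof.
move=> uA; suff : ((block_emb j)^T *m invmx (blockdiag A) *m block_emb j) *m A j = 1%:M.
  by case/mulmx1_unit.
rewrite -mulmxA -blockdiag_emb mulmxA -(mulmxA _ (invmx _)) mulVmx // mulmx1.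
by rewrite block_emb_orth eqxx.
Qed.

Lemma blockdiag_mulV (A : 'I_s -> 'M[R]_p) :
  (forall j, A j \in unitmx) ->
  blockdiag A *m blockdiag (fun j => invmx (A j)) = 1%:M.
Proof.
move=> uA; rewrite mulmx_sumr -sum_block_emb_proj; apply: eq_bigr => j _.
by rewrite !mulmxA blockdiag_emb -(mulmxA (block_emb j)) mulmxV // mulmx1.
Qed.

Lemma mxtrace_blockdiag (A : 'I_s -> 'M[R]_p) :
  \tr (blockdiag A) = \sum_k \tr (A k).
Proof.
rewrite raddf_sum; apply: eq_bigr => k _ /=.
by rewrite mxtrace_mulC mulmxA block_emb_orth eqxx mul1mx.
Qed.

End BlockDiagonal.

Arguments block_emb {R s} p j.

Lemma blockvE (R : numFieldType) s p (j : 'I_s) (v : 'cV[R]_p) :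
  blockv j v = block_emb p j *m v.
Proof.
apply/matrixP => a c; rewrite (ord1 c) {c}; case: (mxvec_indexP a) => i k.
rewrite /blockv !mxE mxvecE mxE (bigD1 k) //= big1 ?addr0; last first.
  by move=> b nb; rewrite mxE mxvec_index_eq (eq_sym k) (negbTE nb) andbF mul0r.
rewrite mxE mxvec_index_eq eqxx andbT.
by case: (i == j); rewrite ?mul1r ?mul0r.
Qed.

Lemma scale_blockv_outer (R : numFieldType) s p (j : 'I_s) (c : R) (g : 'cV[R]_p) :
  c *: (blockv j g *m (blockv j g)^T)
  = block_emb p j *m (c *: (g *m g^T)) *m (block_emb p j)^T.
Proof. by rewrite -scalemxAr -scalemxAl blockvE trmx_mul !mulmxA. Qed.

Section ArtificialModel.

Variables (R : numFieldType) (X : finType) (p s : nat) (r : 'I_s -> nat).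
Variables (f : X -> 'cV[R]_p) (K : 'I_s -> 'M[R]_p).
Variable u : forall j, 'I_(r j) -> 'cV[R]_p.
Arguments u : clear implicits.

Definition art_block (xi : {ffun artX r X -> R}) (j : 'I_s) : 'M[R]_p :=
  \sum_x xi (inl (j, x)) *: ((invmx (K j) *m f x) *m (invmx (K j) *m f x)^T)
  + \sum_(y : 'I_(r j)) xi (inr (existT _ j y)) *: (u j y *m (u j y)^T).

Lemma infoM_artf xi : infoM (artf f K u) xi = blockdiag (art_block xi).
Proof.
rewrite /infoM big_sumType /blockdiag.
under [RHS]eq_bigr => j _ do rewrite /art_block mulmxDr mulmxDl.
rewrite big_split /=; congr (_ + _).
  under [RHS]eq_bigr => j _ do rewrite mulmx_sumr mulmx_suml.
  by rewrite pair_bigA; apply: eq_bigr => -[j x] _; rewrite scale_blockv_outer.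
under [RHS]eq_bigr => j _ do rewrite mulmx_sumr mulmx_suml.
rewrite (sig_big_dep xpredT (fun _ => xpredT)).
by apply: eq_bigr => -[j y] _; rewrite scale_blockv_outer.
Qed.

Variables (B H : 'I_s -> 'M[R]_p) (hs : (0 < s)%N).
Hypothesis hK : forall j, H j = K j *m (K j)^T.
Hypothesis K_unit : forall j, K j \in unitmx.
Hypothesis hu : forall j, invmx (K j) *m B j *m (invmx (K j))^T
                          = \sum_(k < r j) u j k *m (u j k)^T.

Section FeasibleDesign.

Variable xi : {ffun artX r X -> R}.
Hypothesis xi_copies : forall j x, xi (inl (j, x)) = xi (inl (Ordinal hs, x)).
Hypothesis xi_aux : forall j (y : 'I_(r j)), xi (inr (existT _ j y)) = 1.

Lemma art_block_congr j :
  art_block xi j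
  = invmx (K j) *m (infoM f (first_design hs xi) + B j) *m (invmx (K j))^T.
Proof.
rewrite /art_block mulmxDr mulmxDl hu; congr (_ + _).
  rewrite /infoM mulmx_sumr mulmx_suml; apply: eq_bigr => x _.
  by rewrite xi_copies ffunE trmx_mul -scalemxAr -scalemxAl !mulmxA.
by apply: eq_bigr => y _; rewrite xi_aux scale1r.
Qed.

Lemma PhiA_artf_feasible : PhiA (artf f K u) xi = CBRC f B H (first_design hs xi).
Proof.
rewrite /PhiA /CBRC infoM_artf; set M := infoM f (first_design hs xi).
have unit_block j : (art_block xi j \in unitmx) = (M + B j \in unitmx).
  by rewrite art_block_congr !unitmx_mul unitmx_tr unitmx_inv K_unit andbT.
case: (boolP [forall j, M + B j \in unitmx]) => [/forallP uMB | ]; last first.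
  rewrite negb_forall => /existsP [j nj]; case: ifP => // /(blockdiag_unit j).
  by rewrite unit_block (negbTE nj).
have uA j : art_block xi j \in unitmx by rewrite unit_block.
have AV1 := blockdiag_mulV uA; have [-> _] := mulmx1_unit AV1.
rewrite (mulmx1_invmx AV1) mxtrace_blockdiag; congr Some; apply: eq_bigr => j _.
rewrite art_block_congr invmx_congr //.
by rewrite mxtrace_mulC mulmxA -hK mxtrace_mulC.
Qed.

End FeasibleDesign.

Definition art_design (xi : {ffun X -> R}) : {ffun artX r X -> R} :=
  [ffun t => if t is inl (_, x) then xi x else 1].

Lemma first_art_design xi : first_design hs (art_design xi) = xi.
Proof. by apply/ffunP => x; rewrite !ffunE. Qed.

Lemma art_design_feasible (Xi : {ffun X -> R} -> Prop) (xi : {ffun X -> R}) :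
  (forall x, 0 <= xi x) -> Xi xi -> artFeasible hs Xi (art_design xi).
Proof.
move=> xi_ge0 Xi_xi; split; last by rewrite first_art_design.
- by case=> [[j x]|[j y]]; rewrite ffunE.
- by move=> j x; rewrite !ffunE.
- by move=> j y; rewrite ffunE.
Qed.

Lemma PhiA_art_design xi : PhiA (artf f K u) (art_design xi) = CBRC f B H xi.
Proof. by rewrite PhiA_artf_feasible ?first_art_design // => *; rewrite !ffunE. Qed.

End ArtificialModel.

Theorem theorem1 (R : realFieldType) (X : finType) (p s : nat) (hs : (0 < s)%N)
  (f : X -> 'cV[R]_p)
  (hspan : ((1%:M : 'M[R]_p) <= \sum_(x : X) <<(f x)^T>>)%MS)
  (B H : 'I_s -> 'M[R]_p)
  (hB : forall j, nnd (B j)) (hH : forall j, pd (H j))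
  (Xi : {ffun X -> R} -> Prop)
  (hXi_nn : forall xi, Xi xi -> forall x, 0 <= xi x)
  (hXi_fin : exists xi, Xi xi /\ CBRC f B H xi <> None)
  (K : 'I_s -> 'M[R]_p) (hK : forall j, H j = K j *m (K j)^T)
  (u : forall j : 'I_s, 'I_(\rank (B j)) -> 'cV[R]_p)
  (hu : forall j, invmx (K j) *m B j *m (invmx (K j))^T
                  = \sum_(k < \rank (B j)) u j k *m (u j k)^T)
  (xi_star : {ffun artX (fun j => \rank (B j)) X -> R})
  (hfeas : artFeasible hs Xi xi_star)
  (hopt : forall xi, artFeasible hs Xi xi ->
            le_ext (PhiA (artf f K u) xi_star) (PhiA (artf f K u) xi)) :
  Xi (first_design hs xi_star) /\
  forall xi, Xi xi -> le_ext (CBRC f B H (first_design hs xi_star)) (CBRC f B H xi).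
Proof.
(* hspan, hB and hXi_fin only guarantee that the optimum is finite; the
   comparison itself does not need them. *)
have K_unit j : K j \in unitmx := pd_factor_unit (hH j) (hK j).
have [_ copies aux Xi_star] := hfeas.
split=> // xi Xi_xi.
have := hopt _ (art_design_feasible _ hs (hXi_nn _ Xi_xi) Xi_xi).
by rewrite (PhiA_artf_feasible f hK K_unit hu copies aux) (PhiA_art_design f hs hK K_unit hu).
Qed.
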